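(* Let $N\ge M\ge 1$, let $\beta$, $a$ (with Hölder exponent $\theta_1$), $f_0$ (with Hölder exponent $\theta_2$) and $dq_0$ be as in the context, with $dq_0$ satisfying condition (B) and $\int_{|z|<1}|z|^{\gamma}dq_0+\int_{|z|\ge1}|z|^{\gamma-1}dq_0<\infty$ ($\gamma=2$ in case (I), $\gamma=1$ in case (II)). For $\lambda>0$ let $v_\lambda$ be the periodic viscosity solution of (I) $\lambda v_\lambda-a(y)\int_{\mathbb{R}^M}[v_\lambda(y+\beta(z))-v_\lambda(y)-\langle\nabla v_\lambda(y),\beta(z)\rangle]dq_0(z)-f_0(y)=0$ in $\mathbb{T}^N$ (resp. (II), the same without the gradient term), and set $m_\lambda=\lambda v_\lambda$. Then: (i) there is a constant $M_0>0$ such that $\|m_\lambda\|_{L^\infty}\le M_0$ for all $\lambda\in(0,1)$; (ii) for every $\theta\in(0,\min\{\theta_1,\theta_2\})$ there is a constant $C_\theta>0$ such that $|m_\lambda(y)-m_\lambda(y')|\le C_\theta|y-y'|^{\theta}$ for all $y,y'\in\mathbb{T}^N$ and all $\lambda\in(0,1)$. The constants $M_0$ and $C_\theta$ do not depend on $\lambda\in(0,1)$.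
   Context: $\mathbb{T}^N=[0,1]^N$; functions on it are $\mathbb{Z}^N$-periodic on $\mathbb{R}^N$. $\beta:\mathbb{R}^M\to\mathbb{R}^N$ continuous, $\beta(cz)=c\beta(z)$ for $c>0$, $|\beta(z)|\le B_1|z|$. $a$ continuous, periodic, $a\ge a_0>0$, $|a(y)-a(y')|\le L|y-y'|^{\theta_1}$, $\theta_1\in(0,1]$. $f_0$ periodic with $|f_0(y)-f_0(y')|\le L|y-y'|^{\theta_2}$, $\theta_2\in(0,1]$. $dq_0$ positive Radon measure on $\mathbb{R}^M$. Condition (B): with $S_0=\mathrm{supp}(dq_0)$, for any $y,y'\in\mathbb{T}^N$ there exist $y_1=y,\dots,y_m=y'$ such that for any $\varepsilon_i>0$ there are $J_i\subset S_0$ with $y_i+\beta(z)\in B_{\varepsilon_i}(y_{i+1})$ (mod $\mathbb{Z}^N$) for $z\in J_i$ and $\int_{J_i}dq_0>0$. Viscosity solutions are understood via test functions: at a global max (resp. min) of $u-\phi$, $\phi\in C^2$, $u(\hat y)=\phi(\hat y)$, the equation holds with ''$\le$'' (resp. ''$\ge$'') when $\nabla u(\hat y)$ is replaced by $\nabla\phi(\hat y)$ in the (integrable) integrand. *)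

From HB Require Import structures.
From mathcomp Require Import all_boot all_order all_algebra.
From mathcomp Require Import all_classical all_reals all_analysis.
Set Implicit Arguments. Unset Strict Implicit. Unset Printing Implicit Defensive.
Import Order.TTheory GRing.Theory Num.Theory.
Import numFieldNormedType.Exports.
Local Open Scope classical_set_scope.
Local Open Scope ring_scope.

Definition enorm (R : realType) (n : nat) (x : 'rV[R]_n) : R :=
  Num.sqrt (\sum_(i < n) x ord0 i ^+ 2).
Definition edot (R : realType) (n : nat) (x y : 'rV[R]_n) : R :=
  \sum_(i < n) x ord0 i * y ord0 i.

Definition BorelR (R : realType) (M : nat) := g_sigma_algebraType (@open 'rV[R]_M).

Definition intvec (R : realType) (n : nat) (k : 'I_n -> int) : 'rV[R]_n :=
  \row_i (k i)%:~R.

Definition Zperiodic (R : realType) (n : nat) (u : 'rV[R]_n -> R) : Prop :=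
  forall (y : 'rV[R]_n) (k : 'I_n -> int), u (y + intvec R k) = u y.

(* the unit cube [0,1]^n (the torus T^n) *)
Definition cube (R : realType) (n : nat) : set 'rV[R]_n :=
  [set y | forall i, 0 <= y ord0 i <= 1].

Definition hoelder_cond (R : realType) (n : nat) (u : 'rV[R]_n -> R) (L th : R) : Prop :=
  forall y y', `|u y - u y'| <= L * (enorm (y - y')) `^ th.

Definition evec (R : realType) (n : nat) (i : 'I_n) : 'rV[R]_n :=
  \row_j (if j == i then 1 else 0).

Definition partial (R : realType) (n : nat) (i : 'I_n) (f : 'rV[R]_n -> R)
  (x : 'rV[R]_n) : R := 'D_(evec R i) f x.

Definition grad (R : realType) (n : nat) (f : 'rV[R]_n -> R) (x : 'rV[R]_n)
  : 'rV[R]_n := \row_i partial i f x.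

Definition C2 (R : realType) (n : nat) (f : 'rV[R]_n -> R) : Prop :=
  [/\ continuous f,
      forall i x, derivable f x (evec R i),
      forall i, continuous (partial i f),
      forall i j x, derivable (partial i f) x (evec R j)
    & forall i j, continuous (partial j (partial i f))].

Definition radon (R : realType) (M : nat)
  (q : {measure set (BorelR R M) -> \bar R}) : Prop :=
  forall K : set 'rV[R]_M, compact K -> (q K < +oo)%E.

Definition msupport (R : realType) (M : nat)
  (q : {measure set (BorelR R M) -> \bar R}) : set 'rV[R]_M :=
  [set z | forall U : set 'rV[R]_M, open U -> U z -> (0 < q U)%E].

Definition near_mod (R : realType) (n : nat) (x y : 'rV[R]_n) (eps : R) : Prop :=
  exists k : 'I_n -> int, enorm (x + intvec R k - y) < eps.

Definition condB (R : realType) (N M : nat) (beta : 'rV[R]_M -> 'rV[R]_N)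
  (q : {measure set (BorelR R M) -> \bar R}) : Prop :=
  forall y y' : 'rV[R]_N, cube y -> cube y' ->
  exists (m : nat) (ys : nat -> 'rV[R]_N),
    (1 <= m)%N /\ ys 1%N = y /\ ys m = y' /\
    (forall i, (1 <= i < m)%N ->
       forall eps : R, 0 < eps ->
       exists J : set (BorelR R M),
         [/\ measurable J, J `<=` msupport q, (0 < q J)%E &
             forall z, J z -> near_mod (ys i + beta z) (ys i.+1) eps]).

(* The nonlocal integral, with the gradient of u replaced by the vector p:
   int [u(y+beta z) - u(y) - <p, beta z>] dq(z)   (case (I), grad_term = true)
   int [u(y+beta z) - u(y)] dq(z)                 (case (II), grad_term = false)
   as an extended-real Lebesgue integral. *)
Definition nonlocal (R : realType) (N M : nat) (grad_term : bool)
  (beta : 'rV[R]_M -> 'rV[R]_N) (q : {measure set (BorelR R M) -> \bar R})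
  (u : 'rV[R]_N -> R) (y p : 'rV[R]_N) : \bar R :=
  (\int[q]_(z in [set: BorelR R M])
     (u (y + beta z) - u y - (if grad_term then edot p (beta z) else 0))%:E)%E.

Definition visc_sub (R : realType) (N M : nat) (grad_term : bool)
  (beta : 'rV[R]_M -> 'rV[R]_N) (q : {measure set (BorelR R M) -> \bar R})
  (a f : 'rV[R]_N -> R) (lam : R) (u : 'rV[R]_N -> R) : Prop :=
  forall (phi : 'rV[R]_N -> R) (yh : 'rV[R]_N), C2 phi ->
    (forall y, u y - phi y <= u yh - phi yh) -> u yh = phi yh ->
    ((lam * u yh)%:E - (a yh)%:E * nonlocal grad_term beta q u yh (grad phi yh)
      - (f yh)%:E <= 0)%E.

Definition visc_super (R : realType) (N M : nat) (grad_term : bool)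
  (beta : 'rV[R]_M -> 'rV[R]_N) (q : {measure set (BorelR R M) -> \bar R})
  (a f : 'rV[R]_N -> R) (lam : R) (u : 'rV[R]_N -> R) : Prop :=
  forall (phi : 'rV[R]_N -> R) (yh : 'rV[R]_N), C2 phi ->
    (forall y, u yh - phi yh <= u y - phi y) -> u yh = phi yh ->
    ((lam * u yh)%:E - (a yh)%:E * nonlocal grad_term beta q u yh (grad phi yh)
      - (f yh)%:E >= 0)%E.

Definition periodic_visc_sol (R : realType) (N M : nat) (grad_term : bool)
  (beta : 'rV[R]_M -> 'rV[R]_N) (q : {measure set (BorelR R M) -> \bar R})
  (a f : 'rV[R]_N -> R) (lam : R) (u : 'rV[R]_N -> R) : Prop :=
  [/\ continuous u, Zperiodic u,
      visc_sub grad_term beta q a f lam u & visc_super grad_term beta q a f lam u].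

From HB Require Import structures.
From mathcomp Require Import all_boot all_order all_algebra.
From mathcomp Require Import all_classical all_reals all_analysis.
From mathcomp Require Import ring lra.
Set Implicit Arguments. Unset Strict Implicit. Unset Printing Implicit Defensive.
Import Order.TTheory GRing.Theory Num.Theory.
Import numFieldNormedType.Exports.
Local Open Scope classical_set_scope.
Local Open Scope ring_scope.

(* (i) At a maximum point of the periodic solution a constant is an admissible test
   function and the nonlocal term there is nonpositive, so lam v <= sup |f0|;
   symmetrically at a minimum.
   (ii) For x0 <> y0 at distance d0 maximise
     lam (v x - v y) - K (d0^th + d0^(th-2) |x - y|^2).
   At a maximum point (xh, yh) the quadratic penalty gives test functions for the
   sub- and supersolution inequalities with the same gradient, and the nonlocal term
   at xh is dominated by the one at yh because v (xh + w) - v (yh + w) is maximal at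
   w = 0. Subtracting the two inequalities bounds the oscillation by the Hoelder
   moduli of a and f0, which contradicts a positive maximum once K is large;
   evaluating the doubling function at (x0, y0) then gives the estimate. *)

Lemma derivable_affine_quotient (R : realType) n (f : 'rV[R]_n -> R) a v (c d : R) :
  (forall h : R, h != 0 -> h^-1 *: (f (h *: v + a) - f a) = c + h * d) ->
  derivable f a v /\ 'D_v f a = c.
Proof.
move=> quotE.
have affine_cvg : (fun h : R => c + h * d) @ 0^' --> c.
  have : (fun h : R => c + h * d) @ 0 --> c + 0 * d.
    by apply: cvgD; [exact: cvg_cst | apply: cvgM; [exact: cvg_id | exact: cvg_cst]].
  by rewrite mul0r addr0; exact: cvg_within_filter.
have quot_cvg : (fun h : R => h^-1 *: ((f \o shift a) (h *: v) - f a)) @ 0^' --> c.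
  apply: cvg_trans affine_cvg; apply: near_eq_cvg.
  by near=> h; rewrite /= quotE //; near: h; exact: nbhs_dnbhs_neq.
by split; [apply/cvg_ex; exists c | exact: cvg_lim].
Unshelve. all: by end_near. Qed.

Definition sqnorm (R : realType) n (w : 'rV[R]_n) : R := \sum_(i < n) w ord0 i ^+ 2.

Section SquaredNorm.
Variables (R : realType) (n : nat).
Implicit Types (w x y : 'rV[R]_n).

Lemma sqnorm_ge0 w : 0 <= sqnorm w.
Proof. by apply: sumr_ge0 => i _; exact: sqr_ge0. Qed.

Lemma enorm_sqr w : enorm w ^+ 2 = sqnorm w.
Proof. by rewrite sqr_sqrtr // sqnorm_ge0. Qed.

Lemma enorm_ge0 w : 0 <= enorm w.
Proof. exact: sqrtr_ge0. Qed.

Lemma sqnorm0 : sqnorm (0 : 'rV[R]_n) = 0.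
Proof. by rewrite /sqnorm big1 // => i _; rewrite mxE expr0n. Qed.

Lemma sqnorm_distC x y : sqnorm (x - y) = sqnorm (y - x).
Proof. by apply: eq_bigr => i _; rewrite !mxE -sqrrN opprB. Qed.

Lemma enorm_distC x y : enorm (x - y) = enorm (y - x).
Proof. by rewrite /enorm -!/(sqnorm _) sqnorm_distC. Qed.

Lemma sqnormDD x y w : sqnorm ((x + w) - (y + w)) = sqnorm (x - y).
Proof. by rewrite opprD addrACA subrr addr0. Qed.

Lemma coord_sqr_le_sqnorm w i : w ord0 i ^+ 2 <= sqnorm w.
Proof.
rewrite /sqnorm (bigD1 i) //= lerDl.
by apply: sumr_ge0 => j _; exact: sqr_ge0.
Qed.

Lemma enorm_eq0 w : enorm w = 0 -> w = 0.
Proof.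
move=> w0; have /eqP : sqnorm w = 0 by rewrite -enorm_sqr w0 expr0n.
rewrite psumr_eq0 => [/allP wi0|i _]; last exact: sqr_ge0.
by apply/rowP => i; rewrite mxE; apply/eqP; rewrite -sqrf_eq0 (implyP (wi0 i _)) ?mem_index_enum.
Qed.

Lemma enorm_le1D w : enorm w <= 1 + sqnorm w.
Proof.
have w0 := sqnorm_ge0 w.
rewrite -[X in _ <= X]ger0_norm ?addr_ge0 // -sqrtr_sqr ler_sqrt ?sqr_ge0 //.
rewrite -/(sqnorm w) sqrrD expr1n mul1r mulr2n; have := sqr_ge0 (sqnorm w); lra.
Qed.

Lemma sqnorm_cube y : cube y -> sqnorm y <= n%:R.
Proof.
move=> y01; rewrite -[n in n%:R]card_ord -sumr_const.
by apply: ler_sum => i _; have /andP[y0 y1] := y01 i; rewrite expr2 mulr_ile1.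
Qed.

Lemma sqnormD_evec (j : 'I_n) (h : R) w :
  sqnorm (h *: evec R j + w) = sqnorm w + (2 * h * w ord0 j + h ^+ 2).
Proof.
rewrite /sqnorm (eq_bigr (fun i => w ord0 i ^+ 2 +
  (if i == j then 2 * h * w ord0 i + h ^+ 2 else 0))); last first.
  by move=> i _; rewrite !mxE; case: eqP => _; rewrite ?mulr1 ?mulr0 ?add0r ?addr0 // sqrrD; ring.
by rewrite big_split /= -big_mkcond big_pred1_eq.
Qed.

Lemma sqnorm_continuous : continuous (@sqnorm R n).
Proof.
suff sum_cont (s : seq 'I_n) :
  continuous (fun x : 'rV[R]_n => \sum_(i <- s) x ord0 i ^+ 2) by exact: sum_cont.
elim: s => [|i s IHs].
  under eq_fun do rewrite big_nil.
  exact: cst_continuous.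
under eq_fun do rewrite big_cons.
by move=> x; apply: cvgD (IHs x); apply: cvgM; exact: coord_continuous.
Qed.

End SquaredNorm.

Section RealValuedContinuity.
Variables (T : topologicalType) (R : realType) (g : T -> R).
Hypothesis g_cont : continuous g.

Lemma continuous_addr_mulr (c b : R) : continuous (fun x => c + b * g x).
Proof. by move=> x; apply: cvgD; [exact: cvg_cst | apply: cvgM; [exact: cvg_cst | exact: g_cont]]. Qed.

Lemma continuous_mulr_subr (b d : R) : continuous (fun x => b * (g x - d)).
Proof. by move=> x; apply: cvgM; [exact: cvg_cst | apply: cvgB; [exact: g_cont | exact: cvg_cst]]. Qed.

End RealValuedContinuity.

Definition quad (R : realType) n (c b : R) (y0 x : 'rV[R]_n) : R :=
  c + b * sqnorm (x - y0).

Section QuadraticTestFunction.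
Variables (R : realType) (n : nat) (c b : R) (y0 : 'rV[R]_n).

Lemma quad_derive (j : 'I_n) x :
  derivable (quad c b y0) x (evec R j) /\
  partial j (quad c b y0) x = 2 * b * (x ord0 j - y0 ord0 j).
Proof.
apply: (derivable_affine_quotient _ (d := b)) => h h0.
rewrite /quad -(addrA (h *: evec R j)) sqnormD_evec !mxE.
by rewrite -[LHS]/(h^-1 * _); field.
Qed.

Lemma partial_quad (j : 'I_n) :
  partial j (quad c b y0) = fun x => 2 * b * (x ord0 j - y0 ord0 j).
Proof. by apply: funext => x; case: (quad_derive j x). Qed.

Lemma partial_coord_affine (i j : 'I_n) x :
  derivable (fun x : 'rV[R]_n => 2 * b * (x ord0 j - y0 ord0 j)) x (evec R i) /\
  partial i (fun x : 'rV[R]_n => 2 * b * (x ord0 j - y0 ord0 j)) x =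
    (if j == i then 2 * b else 0).
Proof.
apply: (derivable_affine_quotient _ (d := 0)) => h h0.
by rewrite -[LHS]/(h^-1 * _) !mxE; case: eqP => _; field.
Qed.

Lemma quad_C2 : C2 (quad c b y0).
Proof.
split.
- apply: continuous_addr_mulr => x.
  apply: (continuous_comp (f := fun x : 'rV[R]_n => x - y0)).
    exact: (cvgB cvg_id (cvg_cst _)).
  exact: sqnorm_continuous.
- by move=> i x; case: (quad_derive i x).
- by move=> i; rewrite partial_quad; exact/continuous_mulr_subr/coord_continuous.
- by move=> i j x; rewrite partial_quad; case: (partial_coord_affine j i x).
- move=> i j; rewrite partial_quad.
  have -> : partial j (fun x : 'rV[R]_n => 2 * b * (x ord0 i - y0 ord0 i)) =
      fun=> if i == j then 2 * b else 0.
    by apply: funext => x; case: (partial_coord_affine j i x).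
  exact: cst_continuous.
Qed.

Lemma grad_quad x : grad (quad c b y0) x = (2 * b) *: (x - y0).
Proof. by apply/rowP => i; rewrite !mxE partial_quad. Qed.

End QuadraticTestFunction.

(* No integrability is needed: the integral is the difference of the integrals of
   the positive and negative parts, and both are monotone. *)
Lemma integralT_le d (T : measurableType d) (R : realType)
    (mu : {measure set T -> \bar R}) (f g : T -> \bar R) :
  (forall x, (f x <= g x)%E) ->
  (\int[mu]_(x in [set: T]) f x <= \int[mu]_(x in [set: T]) g x)%E.
Proof.
move=> fg; rewrite /integral !patch_setT; apply: leeB.
- apply: ereal_sup_le => _ [h hf <-]; exists h => //= x.
  by apply: le_trans (hf x) _; rewrite !funeposE le_max2.
- apply: ereal_sup_le => _ [h hf <-]; exists h => //= x.
  by apply: le_trans (hf x) _; rewrite !funenegE le_max2 ?leeN2.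
Qed.

Section ViscosityInequalities.
Variables (R : realType) (l a f : R) (I : \bar R).
Hypothesis a_gt0 : 0 < a.

Lemma visc_sub_le (c : R) :
  (l%:E - a%:E * I - f%:E <= 0)%E -> (I <= c%:E)%E -> l <= a * c + f.
Proof.
case: I => [i||] sub_ineq //; last first.
  by move: sub_ineq; rewrite gt0_muleNy ?lte_fin // oppeK addeC /= addye.
rewrite !lee_fin in sub_ineq * => ic.
by have := ler_wpM2l (ltW a_gt0) ic; lra.
Qed.

Lemma visc_super_ge (c : R) :
  (0 <= l%:E - a%:E * I - f%:E)%E -> (c%:E <= I)%E -> a * c + f <= l.
Proof.
case: I => [i||] super_ineq //; last first.
  by move: super_ineq; rewrite gt0_muley ?lte_fin.
rewrite !lee_fin in super_ineq * => ci.
by have := ler_wpM2l (ltW a_gt0) ci; lra.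
Qed.

End ViscosityInequalities.

(* The two inequalities exclude infinite nonlocal terms, and the finite value of
   Ix is then a common witness. *)
Lemma visc_sub_super_common (R : realType) (lx ly ax ay fx fy : R) (Ix Iy : \bar R) :
  0 < ax -> 0 < ay ->
  (lx%:E - ax%:E * Ix - fx%:E <= 0)%E -> (0 <= ly%:E - ay%:E * Iy - fy%:E)%E ->
  (Ix <= Iy)%E ->
  exists i, lx <= ax * i + fx /\ ay * i + fy <= ly.
Proof.
move=> ax0 ay0 sub_ineq super_ineq IxIy.
case: Ix IxIy sub_ineq => [i||] IxIy sub_ineq.
- by exists i; split; [exact: visc_sub_le sub_ineq _ | exact: visc_super_ge super_ineq _].
- move: IxIy super_ineq; rewrite leye_eq => /eqP ->.
  by rewrite gt0_muley ?lte_fin.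
- by move: sub_ineq; rewrite gt0_muleNy ?lte_fin // oppeK addeC /= addye.
Qed.

Section Periodicity.
Variables (R : realType) (n : nat).

Lemma translate_to_cube (y : 'rV[R]_n) : exists k, cube (y + intvec R k).
Proof.
exists (fun i => - Num.floor (y ord0 i)) => i.
have /andP[fl_le lt_fl] := floor_itv (y ord0 i).
rewrite !mxE intrN subr_ge0 fl_le /= lerBlDl ltW //.
by rewrite intrD in lt_fl.
Qed.

Lemma cube_compact : compact (@cube R n).
Proof.
have -> : @cube R n = [set v : 'rV[R]_n | forall i, `[(0:R), 1]%classic (v ord0 i)].
  by apply/seteqP; split => v /= v01 i; have := v01 i; rewrite /= in_itv.
exact: rV_compact (fun=> @segment_compact R 0 1).
Qed.

Lemma cube0 : cube (0 : 'rV[R]_n).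
Proof. by move=> i; rewrite mxE lexx ler01. Qed.

Lemma periodic_max (u : 'rV[R]_n -> R) :
  continuous u -> Zperiodic u -> exists yh, forall y, u y <= u yh.
Proof.
move=> u_cont u_per.
have [c _ c_max] : exists2 c, c \in @cube R n & forall t, t \in @cube R n -> u t <= u c.
  apply: EVT_max_rV; [by exists 0; exact: cube0 | exact: cube_compact |].
  exact: continuous_subspaceT.
exists c => y; have [k yk] := translate_to_cube y.
by rewrite -(u_per y k); apply: c_max; rewrite inE.
Qed.

Lemma periodic_min (u : 'rV[R]_n -> R) :
  continuous u -> Zperiodic u -> exists yh, forall y, u yh <= u y.
Proof.
move=> u_cont u_per.
have [yh yh_max] := @periodic_max (fun y => - u y)
  (fun x => cvgN (u_cont x)) (fun y k => congr1 -%R (u_per y k)).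
by exists yh => y; rewrite -lerN2.
Qed.

End Periodicity.

Section PowerBounds.
Variable R : realType.
Implicit Types d x th : R.

Lemma powR_le_powR d (d' : R) th : 0 <= th -> 0 <= d -> d <= d' -> d `^ th <= d' `^ th.
Proof.
move=> th0 d0 dd'; apply: ge0_ler_powR => //; rewrite nnegrE //.
exact: le_trans dd'.
Qed.

Lemma powR_le1D x th : 0 <= x -> 0 < th <= 1 -> x `^ th <= 1 + x.
Proof.
move=> x0 /andP[th0 th1]; have [x1|x1] := lerP x 1.
  apply: le_trans (powR_le_powR (ltW th0) x0 x1) _.
  by rewrite powR1 lerDl.
by apply: le_trans (ler1_powR (ltW x1) th1) _; rewrite lerDr.
Qed.

Lemma powR_lt1 d th : 0 <= d -> 0 < th -> d `^ th < 1 -> d < 1.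
Proof.
move=> d0 th0; apply: contraTT; rewrite -!leNgt => d1.
by have := powR_le_powR (ltW th0) ler01 d1; rewrite powR1.
Qed.

Lemma le1_powR_antitone d th (th' : R) : 0 <= d <= 1 -> 0 < th <= th' -> d `^ th' <= d `^ th.
Proof.
move=> /andP[d0 d1] /andP[th0 thth'].
have [->|d_neq0] := eqVneq d 0; first by rewrite !powR0 ?gt_eqF // (lt_le_trans th0).
by apply: ger_powR => //; rewrite lt_neqAle eq_sym d_neq0 d0.
Qed.

(* The right-hand side is the penalisation used when doubling variables at scale d0. *)
Lemma powR_le_quad_majorant d (d0 : R) th : 0 <= d -> 0 < d0 -> 0 < th <= 1 ->
  d `^ th <= d0 `^ th + d0 `^ th / d0 ^+ 2 * d ^+ 2.
Proof.
move=> dge0 d0gt0 /andP[th0 th1].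
have quad_ge0 : 0 <= d0 `^ th / d0 ^+ 2 * d ^+ 2.
  by rewrite mulr_ge0 ?divr_ge0 ?powR_ge0 ?sqr_ge0.
have [dd0|d0d] := lerP d d0.
  by apply: le_trans (powR_le_powR (ltW th0) dge0 dd0) _; rewrite lerDl.
apply: le_trans (_ : d0 `^ th / d0 ^+ 2 * d ^+ 2 <= _); last by rewrite lerDr powR_ge0.
have ratio_ge1 : 1 <= d / d0 by rewrite ler_pdivlMr // mul1r ltW.
have -> : d = d0 * (d / d0) by rewrite mulrC divfK // gt_eqF.
rewrite powRM ?divr_ge0 ?(ltW d0gt0) // exprMn mulrA divfK ?expf_neq0 ?gt_eqF //.
rewrite ler_pM2l ?powR_gt0 //; apply: le_trans (ler1_powR ratio_ge1 th1) _.
by rewrite expr2 ler_peMr // (le_trans ler01).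
Qed.

End PowerBounds.

Lemma hoelder_periodic_bounded (R : realType) n (f : 'rV[R]_n -> R) (L th : R) :
  Zperiodic f -> 0 < th <= 1 -> hoelder_cond f L th ->
  exists Fb, 0 <= Fb /\ forall y, `|f y| <= Fb.
Proof.
move=> f_per th01 f_hol.
exists (`|f 0| + `|L| * (2 + n%:R)); split; first by rewrite addr_ge0 ?mulr_ge0 ?addr_ge0.
move=> y; have [k yk] := translate_to_cube y; rewrite -(f_per y k).
set y' := y + intvec R k.
have -> : f y' = f 0 + (f y' - f 0) by rewrite addrC subrK.
apply: le_trans (ler_normD _ _) _; rewrite lerD2l.
apply: le_trans (f_hol y' 0) _; rewrite subr0.
apply: le_trans (_ : `|L| * enorm y' `^ th <= _).
  by rewrite ler_wpM2r ?powR_ge0 ?ler_norm.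
apply: ler_wpM2l => //; apply: le_trans (powR_le1D (enorm_ge0 _) th01) _.
by have := enorm_le1D y'; have := sqnorm_cube yk; lra.
Qed.

Definition doubling (R : realType) n (u : 'rV[R]_n -> R) (lam K A B : R)
    (x y : 'rV[R]_n) : R :=
  lam * (u x - u y) - K * (A + B * sqnorm (x - y)).

Section DoublingVariables.
Variables (R : realType) (n : nat) (u : 'rV[R]_n -> R) (lam K A B Fb : R).
Hypotheses (u_cont : continuous u) (u_per : Zperiodic u).
Hypothesis lam_u_bound : forall y, `|lam * u y| <= Fb.

Lemma lam_osc_le x y : lam * (u x - u y) <= 2 * Fb.
Proof. by rewrite mulrBr; have := lam_u_bound x; have := lam_u_bound y; rewrite !ler_norml; lra. Qed.

Lemma doubling_continuous :
  continuous (fun p : 'rV[R]_n * 'rV[R]_n => doubling u lam K A B p.1 p.2).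
Proof.
move=> p; apply: cvgB.
  apply: cvgM; first exact: cvg_cst.
  apply: cvgB.
    by apply: (continuous_comp (f := fst)); [exact: cvg_fst | exact: u_cont].
  by apply: (continuous_comp (f := snd)); [exact: cvg_snd | exact: u_cont].
apply: cvgM; first exact: cvg_cst.
apply: cvgD; first exact: cvg_cst.
apply: cvgM; first exact: cvg_cst.
apply: (continuous_comp (f := fun p : 'rV[R]_n * 'rV[R]_n => p.1 - p.2)).
  by apply: cvgB; [exact: cvg_fst | exact: cvg_snd].
exact: sqnorm_continuous.
Qed.

Lemma doubling_le_origin x y :
  2 * Fb <= K * B * sqnorm (x - y) -> doubling u lam K A B x y <= doubling u lam K A B 0 0.
Proof.
rewrite /doubling !subrr sqnorm0 !mulr0 => far.
have penaltyE : K * (A + B * sqnorm (x - y)) = K * A + K * B * sqnorm (x - y) by ring.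
by have := lam_osc_le x y; rewrite addr0; lra.
Qed.

Hypotheses (K_gt0 : 0 < K) (B_gt0 : 0 < B).

Lemma doubling_has_max :
  exists xh yh, forall x y, doubling u lam K A B x y <= doubling u lam K A B xh yh.
Proof.
have Fb_ge0 : 0 <= Fb := le_trans (normr_ge0 _) (lam_u_bound 0).
have KB_gt0 : 0 < K * B by rewrite mulr_gt0.
set r := 1 + 2 * Fb / (K * B).
have r_ge1 : 1 <= r by rewrite lerDl divr_ge0 ?mulr_ge0 // ltW.
set box := [set v : 'rV[R]_n | forall i, `[- (r + 1), r + 1]%classic (v ord0 i)].
set G := fun p : 'rV[R]_n * 'rV[R]_n => doubling u lam K A B p.1 p.2.
have origin_in : (0, 0) \in @cube R n `*` box.
  rewrite inE; split => [|i]; first exact: cube0.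
  by rewrite /= mxE in_itv /= oppr_le0 andbb; lra.
have [c _ c_max] : exists2 c, c \in @cube R n `*` box &
    forall t, t \in @cube R n `*` box -> G t <= G c.
  apply: compact_EVT_max; first by exists (0, 0); rewrite -inE.
    by apply: compact_setX; [exact: cube_compact | exact: rV_compact (fun=> @segment_compact R _ _)].
  exact/continuous_subspaceT/doubling_continuous.
(* Translating both points moves x into the cube; if y then leaves the box, the
   penalty pushes the doubling function below its value at the origin. *)
exists c.1, c.2 => x y; have [k xk] := translate_to_cube x.
set x' := x + intvec R k; set y' := y + intvec R k.
have -> : doubling u lam K A B x y = G (x', y').
  by rewrite /G /doubling /= !u_per sqnormDD.
have [y_in|/existsNP [i y_out]] := pselect (box y').
  by apply: c_max; rewrite inE.
apply: (@le_trans _ _ (G (0, 0))); last exact: c_max.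
apply: doubling_le_origin; rewrite [_ * sqnorm _]mulrC -ler_pdivrMr //.
apply: (@le_trans _ _ ((x' - y') ord0 i ^+ 2)); last exact: coord_sqr_le_sqnorm.
have yi_big : r + 1 < `|y' ord0 i|.
  by rewrite ltNge; apply/negP => yi_le; apply: y_out; rewrite /= in_itv /= -ler_norml.
have gap : r <= `|(x' - y') ord0 i|.
  have /andP[xi0 xi1] := xk i.
  have -> : (x' - y') ord0 i = x' ord0 i - y' ord0 i by rewrite !mxE.
  rewrite distrC; apply: le_trans (lerB_dist _ _).
  by rewrite [`|x' _ _|]ger0_norm //; lra.
rewrite -[_ ^+ 2]ger0_norm ?sqr_ge0 // normrX.
by have := normr_ge0 ((x' - y') ord0 i); rewrite /r in gap r_ge1 *; nra.
Qed.

End DoublingVariables.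

Lemma hoelder_cond_weaken (R : realType) n (v : 'rV[R]_n -> R) (L th1 th : R) x y :
  hoelder_cond v L th1 -> 0 < th <= th1 -> enorm (x - y) <= 1 ->
  `|v x - v y| <= `|L| * enorm (x - y) `^ th.
Proof.
move=> v_hol th_th1 d_le1; apply: le_trans (v_hol x y) _.
apply: le_trans (ler_wpM2r (powR_ge0 _ _) (ler_norm L)) _.
by rewrite ler_wpM2l // le1_powR_antitone // enorm_ge0.
Qed.

Section ViscositySolution.
Variables (R : realType) (N M : nat) (g : bool) (beta : 'rV[R]_M -> 'rV[R]_N)
  (q : {measure set (BorelR R M) -> \bar R}) (a f : 'rV[R]_N -> R) (lam : R)
  (u : 'rV[R]_N -> R).

Lemma nonlocal_le_of_increments (y1 y2 p : 'rV[R]_N) :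
  (forall w, u (y1 + w) - u y1 <= u (y2 + w) - u y2) ->
  (nonlocal g beta q u y1 p <= nonlocal g beta q u y2 p)%E.
Proof. by move=> incr; apply: integralT_le => z; rewrite lee_fin lerD2r. Qed.

Lemma nonlocal_le0_at_max (yh : 'rV[R]_N) :
  (forall y, u y <= u yh) -> (nonlocal g beta q u yh 0 <= 0)%E.
Proof.
move=> u_max; rewrite -(integral0 q [set: BorelR R M]); apply: integralT_le => z.
by rewrite lee_fin /edot big1 => [|i _]; rewrite ?mxE ?mul0r // if_same subr0 subr_le0.
Qed.

Lemma nonlocal_ge0_at_min (yh : 'rV[R]_N) :
  (forall y, u yh <= u y) -> (0 <= nonlocal g beta q u yh 0)%E.
Proof.
move=> u_min; rewrite -(integral0 q [set: BorelR R M]); apply: integralT_le => z.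
by rewrite lee_fin /edot big1 => [|i _]; rewrite ?mxE ?mul0r // if_same subr0 subr_ge0.
Qed.

Lemma visc_sub_quad c b y0 yh : visc_sub g beta q a f lam u ->
  (forall y, u y - quad c b y0 y <= u yh - quad c b y0 yh) -> u yh = quad c b y0 yh ->
  ((lam * u yh)%:E - (a yh)%:E * nonlocal g beta q u yh ((2 * b) *: (yh - y0))
    - (f yh)%:E <= 0)%E.
Proof. by move=> u_sub yh_max touch; rewrite -(grad_quad c); apply: u_sub => //; exact: quad_C2. Qed.

Lemma visc_super_quad c b y0 yh : visc_super g beta q a f lam u ->
  (forall y, u yh - quad c b y0 yh <= u y - quad c b y0 y) -> u yh = quad c b y0 yh ->
  (0 <= (lam * u yh)%:E - (a yh)%:E * nonlocal g beta q u yh ((2 * b) *: (yh - y0))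
    - (f yh)%:E)%E.
Proof. by move=> u_super yh_min touch; rewrite -(grad_quad c); apply: u_super => //; exact: quad_C2. Qed.

Hypothesis u_sol : periodic_visc_sol g beta q a f lam u.
Variables (a0 Fb : R).
Hypotheses (a0_gt0 : 0 < a0) (a_ge : forall y, a0 <= a y) (lam_gt0 : 0 < lam).
Hypothesis f_bound : forall y, `|f y| <= Fb.

Let a_gt0 y : 0 < a y := lt_le_trans a0_gt0 (a_ge y).

Lemma visc_sol_bounded y : `|lam * u y| <= Fb.
Proof.
have [u_cont u_per u_sub u_super] := u_sol.
have [yM u_max] := periodic_max u_cont u_per.
have [ym u_min] := periodic_min u_cont u_per.
have const_touch yh : u yh = quad (u yh) 0 yh yh by rewrite /quad mul0r addr0.
have const_cmp yh z : u z - quad (u yh) 0 yh z = u z - u yh by rewrite /quad mul0r addr0.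
have sub_M : lam * u yM <= a yM * 0 + f yM.
  apply: (visc_sub_le (a_gt0 yM) _ (nonlocal_le0_at_max u_max)).
  have -> : (0 : 'rV[R]_N) = (2 * 0) *: (yM - yM) by rewrite mulr0 scale0r.
  by apply: visc_sub_quad => // z; rewrite !const_cmp subrr subr_le0.
have super_m : a ym * 0 + f ym <= lam * u ym.
  apply: (visc_super_ge (a_gt0 ym) _ (nonlocal_ge0_at_min u_min)).
  have -> : (0 : 'rV[R]_N) = (2 * 0) *: (ym - ym) by rewrite mulr0 scale0r.
  by apply: visc_super_quad => // z; rewrite !const_cmp subrr subr_ge0.
rewrite !mulr0 !add0r in sub_M super_m.
have := f_bound yM; have := f_bound ym; rewrite !ler_norml => /andP[fm _] /andP[_ fM].
apply/andP; split.
  by apply: (@le_trans _ _ (lam * u ym)); [lra | rewrite ler_pM2l].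
by apply: (@le_trans _ _ (lam * u yM)); [rewrite ler_pM2l | lra].
Qed.

Lemma visc_common_value_bound xh yh i :
  lam * u xh <= a xh * i + f xh -> a yh * i + f yh <= lam * u yh -> a0 * `|i| <= 2 * Fb.
Proof.
move=> sub_i super_i.
have := visc_sol_bounded xh; have := visc_sol_bounded yh; have := f_bound xh; have := f_bound yh.
rewrite !ler_norml => /andP[fy1 fy2] /andP[fx1 fx2] /andP[uy1 uy2] /andP[ux1 ux2].
have [i_ge0|i_lt0] := lerP 0 i.
  by have := ler_wpM2r i_ge0 (a_ge yh); rewrite ger0_norm //; lra.
have : 0 <= - i by rewrite oppr_ge0 ltW.
move/ler_wpM2r/(_ _ _ (a_ge xh)).
by rewrite ltr0_norm // !mulrN; lra.
Qed.

(* The doubling function is maximised at (xh, yh), so x |-> u x - b |x - yh|^2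
   touches u from above at xh and y |-> u y + b |xh - y|^2 touches it from below
   at yh, with b = K B / lam; both test functions have gradient 2 b (xh - yh). *)
Lemma doubling_max_visc_ineq (K A B : R) xh yh :
  (forall x y, doubling u lam K A B x y <= doubling u lam K A B xh yh) ->
  exists i, lam * u xh <= a xh * i + f xh /\ a yh * i + f yh <= lam * u yh.
Proof.
move=> xy_max; have [_ _ u_sub u_super] := u_sol.
set b := K * B / lam.
have cmp x y : u x - u y - b * sqnorm (x - y) <= u xh - u yh - b * sqnorm (xh - yh).
  have lam_bE s : lam * (b * s) = K * (B * s) by rewrite mulrA mulrCA divff ?gt_eqF ?mulr1 // mulrA.
  rewrite -(ler_pM2l lam_gt0) !mulrBr !lam_bE.
  by have := xy_max x y; rewrite /doubling !mulrBr !mulrDr; lra.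
pose cx := u xh - b * sqnorm (xh - yh); pose cy := u yh + b * sqnorm (yh - xh).
have sub_x := visc_sub_quad (c := cx) (b := b) (y0 := yh) (yh := xh) u_sub.
have super_y := visc_super_quad (c := cy) (b := - b) (y0 := xh) (yh := yh) u_super.
rewrite mulrN scaleNr -scalerN opprB in super_y.
apply: visc_sub_super_common (a_gt0 xh) (a_gt0 yh) (sub_x _ _) (super_y _ _) _.
- by move=> x; rewrite /quad /cx; have := cmp x yh; lra.
- by rewrite /quad /cx subrK.
- by move=> y; rewrite /quad /cy !mulNr (sqnorm_distC y) (sqnorm_distC yh); have := cmp xh y; lra.
- by rewrite /quad /cy mulNr addrK.
- apply: nonlocal_le_of_increments => w.
  by have := cmp (xh + w) (yh + w); rewrite sqnormDD; lra.
Qed.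

Variables (L th1 th2 th K : R).
Hypotheses (a_hol : hoelder_cond a L th1) (f_hol : hoelder_cond f L th2).
Hypotheses (th_gt0 : 0 < th) (th_le1 : th <= 1) (th_le_th1 : th <= th1) (th_le_th2 : th <= th2).
Hypotheses (K_gt_osc : 2 * Fb < K) (K_ge_hoelder : `|L| * (2 * Fb / a0) + `|L| <= K).

Let K_gt0 : 0 < K.
Proof. by apply: le_lt_trans K_gt_osc; rewrite mulr_ge0 // (le_trans (normr_ge0 _) (f_bound 0)). Qed.

Lemma doubling_max_le0 (d0 : R) xh yh : 0 < d0 ->
  let A := d0 `^ th in let B := A / d0 ^+ 2 in
  (forall x y, doubling u lam K A B x y <= doubling u lam K A B xh yh) ->
  doubling u lam K A B xh yh <= 0.
Proof.
move=> d0_gt0 A B xy_max; rewrite leNgt; apply/negP => Phi_gt0.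
have [i [sub_i super_i]] := doubling_max_visc_ineq xy_max.
have i_le : `|i| <= 2 * Fb / a0 by rewrite ler_pdivlMr // mulrC (visc_common_value_bound sub_i super_i).
set d := enorm (xh - yh); have d_ge0 : 0 <= d := enorm_ge0 _.
have gain : K * d `^ th < lam * (u xh - u yh).
  have : d `^ th <= A + B * sqnorm (xh - yh).
    by rewrite -enorm_sqr powR_le_quad_majorant // th_gt0.
  by move/(ler_wpM2l (ltW K_gt0)); move: Phi_gt0; rewrite /doubling; lra.
have d_le1 : d <= 1.
  apply/ltW/(powR_lt1 d_ge0 th_gt0); rewrite -(ltr_pM2l K_gt0) mulr1.
  apply: lt_le_trans gain _; apply: le_trans (lam_osc_le visc_sol_bounded xh yh) _.
  exact: ltW.
have a_osc : (a xh - a yh) * i <= `|L| * d `^ th * (2 * Fb / a0).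
  apply: le_trans (ler_norm _) _; rewrite normrM.
  apply: ler_pM => //; apply: hoelder_cond_weaken a_hol _ d_le1.
  by rewrite th_gt0.
have f_osc : f xh - f yh <= `|L| * d `^ th.
  apply: le_trans (ler_norm _) _; apply: hoelder_cond_weaken f_hol _ d_le1.
  by rewrite th_gt0.
have := ler_wpM2r (powR_ge0 d th) K_ge_hoelder.
by rewrite mulrDl mulrAC; lra.
Qed.

Lemma visc_sol_hoelder_half x0 y0 :
  lam * u x0 - lam * u y0 <= 2 * K * enorm (x0 - y0) `^ th.
Proof.
have [u_cont u_per _ _] := u_sol.
set d0 := enorm (x0 - y0).
have [/enorm_eq0/subr0_eq ->|d0_neq0] := eqVneq d0 0.
  by rewrite subrr mulr_ge0 ?powR_ge0 // mulr_ge0 // ltW.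
have d0_gt0 : 0 < d0 by rewrite lt_neqAle eq_sym d0_neq0 enorm_ge0.
have B_gt0 : 0 < d0 `^ th / d0 ^+ 2 by rewrite divr_gt0 ?powR_gt0 ?exprn_gt0.
have [xh [yh xy_max]] := doubling_has_max (d0 `^ th) u_cont u_per visc_sol_bounded K_gt0 B_gt0.
have := le_trans (xy_max x0 y0) (doubling_max_le0 d0_gt0 xy_max).
by rewrite /doubling -enorm_sqr -/d0 divfK ?expf_neq0 // mulrBr; lra.
Qed.

Lemma visc_sol_hoelder x y : `|lam * u x - lam * u y| <= 2 * K * enorm (x - y) `^ th.
Proof.
rewrite ler_norml visc_sol_hoelder_half andbT enorm_distC lerNl opprB.
exact: visc_sol_hoelder_half.
Qed.

End ViscositySolution.

Theorem lemma3p2 (R : realType) (N M : nat) (grad_term : bool)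
  (beta : 'rV[R]_M -> 'rV[R]_N) (a f0 : 'rV[R]_N -> R)
  (q0 : {measure set (BorelR R M) -> \bar R})
  (B1 a0 L th1 th2 : R) (v : R -> 'rV[R]_N -> R) :
  (1 <= M)%N -> (M <= N)%N ->
  continuous beta ->
  (forall (c : R) z, 0 < c -> beta (c *: z) = c *: beta z) ->
  (forall z, enorm (beta z) <= B1 * enorm z) ->
  continuous a -> Zperiodic a -> 0 < a0 -> (forall y, a0 <= a y) ->
  0 < th1 <= 1 -> hoelder_cond a L th1 ->
  Zperiodic f0 -> 0 < th2 <= 1 -> hoelder_cond f0 L th2 ->
  radon q0 -> condB beta q0 ->
  let gamma := if grad_term then 2%N else 1%N in
  (\int[q0]_(z in [set z | (enorm z < 1)%R]) (enorm z ^+ gamma)%R%:E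
   + \int[q0]_(z in [set z | (1 <= enorm z)%R]) (enorm z ^+ gamma.-1)%R%:E < +oo)%E ->
  (forall lam : R, 0 < lam -> periodic_visc_sol grad_term beta q0 a f0 lam (v lam)) ->
  (exists M0 : R, 0 < M0 /\
     forall lam : R, 0 < lam < 1 -> forall y, `|lam * v lam y| <= M0) /\
  (forall th : R, 0 < th < Num.min th1 th2 ->
     exists C : R, 0 < C /\
       forall lam : R, 0 < lam < 1 -> forall y y', cube y -> cube y' ->
         `|lam * v lam y - lam * v lam y'| <= C * (enorm (y - y')) `^ th).
Proof.
move=> _ _ _ _ _ _ _ a0_gt0 a_ge /andP[_ th1_le1] a_hol f_per th2_01 f_hol _ _ _ _ v_sol.
have [Fb [Fb_ge0 f_bound]] := hoelder_periodic_bounded f_per th2_01 f_hol.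
split.
  exists (Fb + 1); split => [|lam /andP[lam_gt0 _] y]; first by rewrite ltr_pwDr.
  by apply: le_trans (visc_sol_bounded (v_sol lam lam_gt0) a0_gt0 a_ge lam_gt0 f_bound y) _; rewrite lerDl.
move=> th /andP[th_gt0]; rewrite lt_min => /andP[th_lt1 th_lt2].
set K := 2 * Fb + (`|L| * (2 * Fb / a0) + `|L|) + 1.
have hoelder_ge0 : 0 <= `|L| * (2 * Fb / a0) + `|L|.
  by rewrite addr_ge0 // mulr_ge0 // divr_ge0 ?mulr_ge0 // ltW.
exists (2 * K); split => [|lam /andP[lam_gt0 _] y y' _ _].
  by rewrite mulr_gt0 // /K; lra.
apply: (visc_sol_hoelder (K := K) (v_sol lam lam_gt0) a0_gt0 a_ge lam_gt0 f_bound a_hol f_hol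
  th_gt0 (le_trans (ltW th_lt1) th1_le1) (ltW th_lt1) (ltW th_lt2)); rewrite /K; lra.
Qed.
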